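(* Let $G$ be a connected graph on $n$ nodes. Let $v_1,\dots,v_\ell\in\mathbb R^n$ and $\lambda_1,\dots,\lambda_\ell\ge0$ with $\sum_i\lambda_i=1$, and put $v=\sum_{i=1}^\ell\lambda_iv_i$. Let $v(t)$ denote the state of the averaging process started from $v$, and $v_i(t)$ the state of the process started from $v_i$; let $\bar v$ and $\bar v_i$ be the corresponding constant vectors of averages. Then for every $t\ge0$, $$\mathbb E\|v(t)-\bar v\|_1\;\le\;\sum_{i=1}^\ell\lambda_i\,\mathbb E\|v_i(t)-\bar v_i\|_1 .$$
   Context: The averaging process on a finite, undirected, connected graph $G=(V,E)$, $V=\{1,\dots,n\}$: the state vector $v(t)\in\mathbb R^n$, $t=0,1,2,\dots$, starts from a given $v(0)$; at each step $t\ge 1$ an edge $\{i,j\}\in E$ is chosen uniformly at random (independently of all previous choices) and both $v_i$ and $v_j$ are replaced by $(v_i+v_j)/2$, all other coordinates unchanged. For an initial vector $w$, its constant vector of averages is $\bar w=(a,\dots,a)^T$ with $a=\frac1n\sum_j w_j$. *)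

From mathcomp Require Import all_boot all_order all_algebra.
Set Implicit Arguments. Unset Strict Implicit. Unset Printing Implicit Defensive.
Import Order.TTheory GRing.Theory Num.Theory.
Local Open Scope ring_scope.

Definition simple_graph (n : nat) (adj : rel 'I_n) : Prop :=
  irreflexive adj /\ symmetric adj.
Definition connected_graph (n : nat) (adj : rel 'I_n) : Prop :=
  forall i j : 'I_n, connect adj i j.

(* Edge set E: each undirected edge {i,j} represented once as (i,j), i < j. *)
Definition edges (n : nat) (adj : rel 'I_n) : {set 'I_n * 'I_n} :=
  [set p : 'I_n * 'I_n | (val p.1 < val p.2)%N && adj p.1 p.2].

Definition avg_step (R : realFieldType) (n : nat) (e : 'I_n * 'I_n)
  (v : 'I_n -> R) : 'I_n -> R :=
  fun k => if (k == e.1) || (k == e.2) then (v e.1 + v e.2) / 2 else v k.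

Definition run (R : realFieldType) (n : nat) (v : 'I_n -> R)
  (s : seq ('I_n * 'I_n)) : 'I_n -> R :=
  foldl (fun w e => avg_step e w) v s.

Definition avgvec (R : realFieldType) (n : nat) (w : 'I_n -> R) : 'I_n -> R :=
  fun _ => (\sum_j w j) / n%:R.

Definition norm1 (R : realFieldType) (n : nat) (w : 'I_n -> R) : R :=
  \sum_k `|w k|.

(* Expectation of F(v(t)) where v(t) is the state of the averaging process
   after t steps started from v: the t edges are i.i.d. uniform on E, so the
   law of the edge sequence is uniform on E^t. *)
Definition expect_at (R : realFieldType) (n : nat) (adj : rel 'I_n) (t : nat)
  (v : 'I_n -> R) (F : ('I_n -> R) -> R) : R :=
  ((#|edges adj| ^ t)%:R)^-1 *
  \sum_(s : t.-tuple ('I_n * 'I_n) | all (mem (edges adj)) s) F (run v s).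

From mathcomp Require Import all_boot all_order all_algebra.
Set Implicit Arguments. Unset Strict Implicit. Unset Printing Implicit Defensive.
Import Order.TTheory GRing.Theory Num.Theory.
Local Open Scope ring_scope.

(* Couple all the processes through the same edge sequence.  For a fixed
   sequence of edges the process and the averaging map are linear in the
   initial state, so v(t) - vbar is the lambda-combination of the
   v_i(t) - vbar_i; the triangle inequality for the l1 norm then holds for
   every edge sequence, and averaging over the sequences preserves it. *)

Section Combination.

Variables (R : realFieldType) (n l : nat) (lam : 'I_l -> R).

Definition comb (vs : 'I_l -> 'I_n -> R) : 'I_n -> R :=
  fun k => \sum_i lam i * vs i k.

Lemma eq_run s {v w : 'I_n -> R} : v =1 w -> run v s =1 run w s.
Proof.
elim: s v w => [|e s IHs] v w vw //=.
by apply: IHs => k; rewrite /avg_step !vw.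
Qed.

Lemma avg_step_comb e vs : avg_step e (comb vs) =1 comb (fun i => avg_step e (vs i)).
Proof.
move=> k; rewrite /avg_step /comb; case: ifP => // _.
rewrite -big_split /= mulr_suml; apply: eq_bigr => i _.
by rewrite -mulrDr mulrA.
Qed.

Lemma run_comb s vs : run (comb vs) s =1 comb (fun i => run (vs i) s).
Proof.
elim: s vs => [|e s IHs] vs //= k.
by rewrite (eq_run s (avg_step_comb e vs)) IHs.
Qed.

Lemma avgvec_comb vs : avgvec (comb vs) =1 comb (fun i => avgvec (vs i)).
Proof.
move=> k; rewrite /avgvec /comb exchange_big /= mulr_suml.
by apply: eq_bigr => i _; rewrite -mulr_sumr mulrA.
Qed.

Lemma deviation_comb s vs :
  (fun k => run (comb vs) s k - avgvec (comb vs) k)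
  =1 comb (fun i k => run (vs i) s k - avgvec (vs i) k).
Proof.
move=> k; rewrite run_comb avgvec_comb /comb -sumrB.
by apply: eq_bigr => i _; rewrite mulrBr.
Qed.

Lemma expect_at_comb_le (adj : rel 'I_n) t vs F (G : 'I_l -> ('I_n -> R) -> R) :
  (forall s, F (run (comb vs) s) <= \sum_i lam i * G i (run (vs i) s)) ->
  expect_at adj t (comb vs) F <= \sum_i lam i * expect_at adj t (vs i) (G i).
Proof.
move=> FG; rewrite /expect_at.
under [leRHS]eq_bigr => i _ do rewrite mulrCA mulr_sumr.
rewrite -mulr_sumr ler_wpM2l ?invr_ge0 ?ler0n //.
by rewrite [leRHS]exchange_big; apply: ler_sum => s _.
Qed.

Hypothesis lam_ge0 : forall i, 0 <= lam i.

Lemma norm1_comb_le (ws : 'I_l -> 'I_n -> R) :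
  norm1 (comb ws) <= \sum_i lam i * norm1 (ws i).
Proof.
rewrite /norm1 /comb; under [leRHS]eq_bigr => i _ do rewrite mulr_sumr.
rewrite [leRHS]exchange_big; apply: ler_sum => k _.
apply: le_trans (ler_norm_sum _ _ _) _.
by apply: ler_sum => i _; rewrite normrM ger0_norm.
Qed.

End Combination.

Theorem proposition2 (R : realFieldType) (n : nat) (adj : rel 'I_n)
  (Hg : simple_graph adj) (Hc : connected_graph adj)
  (l : nat) (vs : 'I_l -> 'I_n -> R) (lam : 'I_l -> R)
  (Hlam0 : forall i, 0 <= lam i) (Hlam1 : \sum_i lam i = 1) (t : nat) :
  let v : 'I_n -> R := fun k => \sum_i lam i * vs i k in
  expect_at adj t v (fun w => norm1 (fun k => w k - avgvec v k))
  <= \sum_i lam i *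
       expect_at adj t (vs i) (fun w => norm1 (fun k => w k - avgvec (vs i) k)).
Proof.
apply: (@expect_at_comb_le _ _ _ lam adj t vs _
  (fun i w => norm1 (fun k => w k - avgvec (vs i) k))) => s.
apply: le_trans (norm1_comb_le Hlam0 _).
rewrite le_eqVlt; apply/orP; left; apply/eqP.
by rewrite /norm1; apply: eq_bigr => k _; rewrite (deviation_comb lam s vs k).
Qed.
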